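(* The rules $\mathrm{MC}$, $\mathrm{MCC}$, $\mathrm{RA}$ and $\mathrm{FULL}_H$ are agenda separable: for each such rule $R$, every agenda $\mathcal{A}$, every independent partition $\{\mathcal{A}_1,\mathcal{A}_2\}$ of $\mathcal{A}$ and every profile $P\in\mathcal{J}_{\mathcal{A}}^n$, $R(P)=\{J^1\cup J^2 \mid J^1\in R(P\downarrow\mathcal{A}_1),\ J^2\in R(P\downarrow\mathcal{A}_2)\}$.
   Context: Fix a propositional language, a consistent formula $\Gamma$ (the integrity constraint) and a number $n\ge1$ of agents. An issue is a pair $\{\varphi,\neg\varphi\}$ with $\varphi$ neither a tautology nor a contradiction. An agenda $\mathcal{A}$ is a finite set of issues; a sub-agenda is a union of some issues of $\mathcal{A}$. A set $S$ of formulas is consistent if $S\cup\{\Gamma\}$ is satisfiable. A judgment set over $\mathcal{A}$ is a subset $J\subseteq\mathcal{A}$; it is complete if it contains $\varphi$ or $\neg\varphi$ for each issue. $\mathcal{J}_{\mathcal{A}}$ is the set of complete consistent judgment sets over $\mathcal{A}$ (likewise for sub-agendas, same $\Gamma$). A profile is $P=\langle J_1,\dots,J_n\rangle\in\mathcal{J}_{\mathcal{A}}^n$; $P\downarrow\mathcal{A}'=\langle J_1\cap\mathcal{A}',\dots,J_n\cap\mathcal{A}'\rangle$. $N(P,\varphi)=|\{i:\varphi\in J_i\}|$; $m(P)=\{\varphi\in\mathcal{A}: N(P,\varphi)>n/2\}$; $P$ is majority-consistent if $m(P)$ is consistent. $d_H(J,J')=|J\setminus J'|$, and for profiles $P=\langle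 J_i\rangle$, $Q=\langle J'_i\rangle$, $D_H(P,Q)=\sum_i d_H(J_i,J'_i)$. A partition $\{\mathcal{A}_1,\mathcal{A}_2\}$ of $\mathcal{A}$ into sub-agendas is independent if for all $J^1\in\mathcal{J}_{\mathcal{A}_1}$, $J^2\in\mathcal{J}_{\mathcal{A}_2}$, $J^1\cup J^2$ is consistent. Rules: $\mathrm{MC}(P)$ is the set of $J\in\mathcal{J}_{\mathcal{A}}$ with $J\supseteq S$ for some inclusion-maximal consistent subset $S$ of $m(P)$. $\mathrm{MCC}(P)$ is the set of $J\in\mathcal{J}_{\mathcal{A}}$ with $J\supseteq S$ for some consistent subset $S$ of $m(P)$ of maximum cardinality. $\mathrm{RA}$ (ranked agenda): writing $\mathcal{A}=\{\psi_1,\dots,\psi_{2m}\}$, for each permutation $\sigma$ such that $N(P,\psi_{\sigma(1)})\ge\dots\ge N(P,\psi_{\sigma(2m)})$, let $J_\sigma$ be obtained by starting from $S=\emptyset$ and, for $j=1,\dots,2m$, adding $\psi_{\sigma(j)}$ to $S$ if $S\cup\{\psi_{\sigma(j)}\}$ is consistent; $\mathrm{RA}(P)$ is the set of all such $J_\sigma$. $\mathrm{FULL}_H(P)$ is the set of $J\in\mathcal{J}_{\mathcal{A}}$ with $J\supseteq m(Q)$ for some majority-consistent profile $Q\in\mathcal{J}_{\mathcal{A}}^n$ minimizing $D_H(P,Q)$ among majority-consistent profiles. *)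

From mathcomp Require Import all_boot.
Set Implicit Arguments. Unset Strict Implicit. Unset Printing Implicit Defensive.

Inductive form (V : Type) : Type :=
| FAtom of V
| FTop | FBot
| FNeg of form V
| FAnd of form V & form V
| FOr of form V & form V
| FImp of form V & form V
| FIff of form V & form V.

Fixpoint eval (V : Type) (v : V -> bool) (f : form V) : bool :=
  match f with
  | FAtom a => v a
  | FTop => true
  | FBot => false
  | FNeg g => ~~ eval v g
  | FAnd g h => eval v g && eval v h
  | FOr g h => eval v g || eval v h
  | FImp g h => eval v g ==> eval v h
  | FIff g h => eval v g == eval v h
  end.

Definition tautology V (f : form V) : Prop := forall v, eval v f.
Definition contradiction V (f : form V) : Prop := forall v, eval v f = false.

Section Agg.
Variables (V : Type) (Gamma : form V) (n : nat) (I : finType) (phi : I -> form V).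

(* The agenda: issue i is {phi i, ~ phi i}; the agenda formula (i,true) is
   phi i and (i,false) is its negation ~ phi i. *)
Definition lit (x : I * bool) : form V :=
  if x.2 then phi x.1 else FNeg (phi x.1).

(* The issues are genuine (phi i neither tautology nor contradiction) and the
   agenda formulas are pairwise distinct (A = {psi_1,...,psi_2m}). *)
Definition agenda_ok : Prop :=
  injective lit /\
  (forall i, ~ tautology (phi i) /\ ~ contradiction (phi i)).

Definition consistent (S : {set I * bool}) : Prop :=
  exists v : V -> bool, eval v Gamma /\ forall x, x \in S -> eval v (lit x).

(* Sub-agendas are given by sets of issues; agf A' is the set of formulas. *)
Definition agf (A' : {set I}) : {set I * bool} := [set x | x.1 \in A'].

Definition JS (A' : {set I}) (J : {set I * bool}) : Prop :=
  J \subset agf A' /\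
  (forall i, i \in A' -> ((i, true) \in J) || ((i, false) \in J)) /\
  consistent J.

Definition profile := 'I_n -> {set I * bool}.

Definition is_profile (A' : {set I}) (P : profile) : Prop :=
  forall k, JS A' (P k).

Definition restrict (P : profile) (A' : {set I}) : profile :=
  fun k => P k :&: agf A'.

Definition N (P : profile) (x : I * bool) : nat := #|[set k | x \in P k]|.

Definition maj (A' : {set I}) (P : profile) : {set I * bool} :=
  [set x | (x \in agf A') && (n < 2 * N P x)].

(* A rule maps a (sub-)agenda and a profile to a set of judgment sets,
   represented by its membership predicate. *)
Definition rule := {set I} -> profile -> {set I * bool} -> Prop.

Definition MC : rule := fun A' P J =>
  JS A' J /\
  exists S : {set I * bool}, [/\ S \subset maj A' P, consistent S,
     (forall S' : {set I * bool}, S \subset S' -> S' \subset maj A' P -> consistent S' -> S' = S)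
     & S \subset J].

Definition MCC : rule := fun A' P J =>
  JS A' J /\
  exists S : {set I * bool}, [/\ S \subset maj A' P, consistent S,
     (forall S' : {set I * bool}, S' \subset maj A' P -> consistent S' -> #|S'| <= #|S|)
     & S \subset J].

Inductive greedy : {set I * bool} -> seq (I * bool) -> {set I * bool} -> Prop :=
| greedy_nil S : greedy S [::] S
| greedy_add S x s T :
    consistent (x |: S) -> greedy (x |: S) s T -> greedy S (x :: s) T
| greedy_skip S x s T :
    ~ consistent (x |: S) -> greedy S s T -> greedy S (x :: s) T.

Definition RA : rule := fun A' P J =>
  exists s : seq (I * bool),
    [/\ perm_eq s (enum (agf A')),
        sorted (fun x y => N P y <= N P x) s
      & greedy set0 s J].

Definition dH (J J' : {set I * bool}) : nat := #|J :\: J'|.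

Definition DH (P Q : profile) : nat := \sum_(k < n) dH (P k) (Q k).

Definition FULL_H : rule := fun A' P J =>
  JS A' J /\
  exists Q : profile, [/\ is_profile A' Q, consistent (maj A' Q),
     (forall Q' : profile, is_profile A' Q' -> consistent (maj A' Q') -> DH P Q <= DH P Q')
     & maj A' Q \subset J].

Definition partition2 (A1 A2 : {set I}) : Prop :=
  [/\ A1 :|: A2 = [set: I], A1 :&: A2 = set0, A1 != set0 & A2 != set0].

Definition independent (A1 A2 : {set I}) : Prop :=
  forall J1 J2 : {set I * bool}, JS A1 J1 -> JS A2 J2 -> consistent (J1 :|: J2).

Definition agenda_separable (R : rule) : Prop :=
  forall (A1 A2 : {set I}) (P : profile),
    partition2 A1 A2 -> independent A1 A2 -> is_profile [set: I] P ->
    forall J, R [set: I] P J <->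
      exists J1 J2 : {set I * bool}, [/\ R A1 (restrict P A1) J1, R A2 (restrict P A2) J2
                      & J = J1 :|: J2].

End Agg.

From mathcomp Require Import all_boot.
From Stdlib Require Import Classical FunctionalExtensionality.
Set Implicit Arguments. Unset Strict Implicit. Unset Printing Implicit Defensive.

(* Independence of {A1, A2} makes consistency local: a set of agenda formulas
   is consistent as soon as its A1-part and its A2-part are, since each part
   extends to a complete consistent judgment set on its sub-agenda.  The
   majority outcome, the support counts, the Hamming distance and the
   cardinalities all split along the partition too, so the witnesses used by
   MC, MCC and FULL_H restrict to witnesses on A1 and on A2 and conversely glue
   back.  For RA, the greedy scan of a ranked enumeration, restricted to the
   A1-formulas, is the greedy scan of the restricted enumeration. *)

Lemma setDIIr (T : finType) (A B C : {set T}) : (A :&: C) :\: (B :&: C) = (A :\: B) :&: C.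
Proof. by apply/setP=> x; rewrite !inE; case: (x \in C); rewrite ?andbF ?andbT. Qed.

Lemma setU1I (T : finType) (x : T) (A B : {set T}) :
  (x |: A) :&: B = if x \in B then x |: (A :&: B) else A :&: B.
Proof.
apply/setP=> y; case: ifP => xB; rewrite !inE;
  by case: (eqVneq y x) => [->|]; rewrite ?xB ?andbF.
Qed.

Section Agenda.
Variables (V : Type) (Gamma : form V) (n : nat) (I : finType) (phi : I -> form V).

Local Notation consistent := (consistent Gamma phi).
Local Notation JS := (JS Gamma phi).
Local Notation is_profile := (is_profile Gamma phi).
Local Notation profile := (profile n I).
Local Notation greedy := (greedy Gamma phi).

Lemma consistentS (S T : {set I * bool}) : S \subset T -> consistent T -> consistent S.
Proof. by move=> /subsetP sST [v [Gv vT]]; exists v; split=> // x /sST /vT. Qed.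

Lemma consistent_extend A (S : {set I * bool}) :
  consistent S -> S \subset agf A -> exists2 J, JS A J & S \subset J.
Proof.
move=> [v [Gv vS]] /subsetP SA.
exists [set x in agf A | eval v (lit phi x)].
  split; first by apply/subsetP=> x; rewrite inE => /andP[].
  split; last by exists v; split=> // x; rewrite inE => /andP[].
  by move=> i iA; rewrite !inE /= iA /lit /=; case: (eval v (phi i)).
by apply/subsetP=> x xS; rewrite inE SA // vS.
Qed.

Lemma JS_restrict A (J : {set I * bool}) : JS [set: I] J -> JS A (J :&: agf A).
Proof.
move=> [_ [Jc Jcons]]; split; first exact: subsetIr.
split; last exact: consistentS (subsetIl _ _) Jcons.
by move=> i iA; rewrite !inE /= iA !andbT; apply: Jc; rewrite inE.
Qed.

Lemma is_profile_restrict (Q : profile) A :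
  is_profile [set: I] Q -> is_profile A (restrict Q A).
Proof. by move=> Qp k; apply: JS_restrict. Qed.

Lemma N_restrict (P : profile) A x : x \in agf A -> N (restrict P A) x = N P x.
Proof. by rewrite inE => xA; apply: eq_card => k; rewrite !inE xA andbT. Qed.

Lemma maj_restrict (P : profile) A : maj A (restrict P A) = maj [set: I] P :&: agf A.
Proof.
apply/setP=> x; rewrite !inE andbC /=.
by case xA: (x.1 \in A); rewrite ?andbF // N_restrict // inE xA.
Qed.

Lemma maj_sub A (P : profile) : maj A P \subset agf A.
Proof. by apply/subsetP=> x; rewrite inE => /andP[]. Qed.

Lemma greedy_total S s : exists T, greedy S s T.
Proof.
elim: s S => [|x s IH] S; first by exists S; apply: greedy_nil.
have [xSc | xSnc] := classic (consistent (x |: S)).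
  by have [T g] := IH (x |: S); exists T; apply: greedy_add.
by have [T g] := IH S; exists T; apply: greedy_skip.
Qed.

Lemma greedy_functional S s T1 T2 : greedy S s T1 -> greedy S s T2 -> T1 = T2.
Proof.
move=> g1; elim: g1 T2 => {S s T1} [S | S x s T xSc _ IH | S x s T xSnc _ IH] T2 g2;
  inversion g2 as [|? ? ? ? xSc' g2'|? ? ? ? xSnc' g2']; subst;
  [done | exact: IH g2' | by case: xSnc' | by case: xSnc | exact: IH g2'].
Qed.

Definition ranked (P : profile) : rel (I * bool) := fun x y => N P y <= N P x.

Lemma ranked_trans P : transitive (ranked P).
Proof. by move=> y x z xy yz; apply: leq_trans yz xy. Qed.

Lemma ranked_total P : total (ranked P).
Proof. by move=> x y; apply: leq_total. Qed.

Lemma sorted_ranked_restrict P A s : {subset s <= agf A} ->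
  sorted (ranked (restrict P A)) s = sorted (ranked P) s.
Proof.
by move=> /allP; apply: eq_in_sorted => x y xA yA; rewrite /ranked !N_restrict.
Qed.

Lemma filter_sort_ranked P (a : pred (I * bool)) t :
  sorted (ranked P) [seq x <- t | a x] ->
  [seq x <- sort (ranked P) t | a x] = [seq x <- t | a x].
Proof.
move=> ts; rewrite filter_sort; [exact: sorted_sort (@ranked_trans P) _ ts|..].
  exact: ranked_total.
exact: ranked_trans.
Qed.

Lemma independent_sym (A1 A2 : {set I}) :
  independent Gamma phi A1 A2 -> independent Gamma phi A2 A1.
Proof. by move=> ind J2 J1 J2s J1s; rewrite setUC; apply: ind. Qed.

Lemma partition2_compl (A1 A2 : {set I}) : partition2 A1 A2 -> A2 = ~: A1.
Proof.
case=> AU AI _ _; apply/setP=> i; rewrite inE.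
have /setP/(_ i) := AU; have /setP/(_ i) := AI; rewrite !inE.
by case: (i \in A1); case: (i \in A2).
Qed.

Hypothesis Gamma_sat : exists v, eval v Gamma.

Lemma consistent0 : consistent set0.
Proof. by case: Gamma_sat => v Gv; exists v; split=> // x; rewrite inE. Qed.

Section Partition.
Variables A1 A2 : {set I}.
Hypothesis A2_compl : A2 = ~: A1.
Hypothesis indep : independent Gamma phi A1 A2.

Lemma agf_compl : agf A2 = ~: agf A1.
Proof. by apply/setP=> x; rewrite A2_compl !inE. Qed.

Lemma setI_agf_split (T : {set I * bool}) : T :&: agf A1 :|: T :&: agf A2 = T.
Proof. by rewrite agf_compl -setDE setID. Qed.

Lemma card_agf_split (T : {set I * bool}) : #|T :&: agf A1| + #|T :&: agf A2| = #|T|.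
Proof. by rewrite agf_compl -setDE cardsID. Qed.

Lemma setUI_agf1 (X1 X2 : {set I * bool}) :
  X1 \subset agf A1 -> X2 \subset agf A2 -> (X1 :|: X2) :&: agf A1 = X1.
Proof.
rewrite agf_compl setIUl => /setIidPl ->.
by rewrite -disjoints_subset => /disjoint_setI0 ->; rewrite setU0.
Qed.

Lemma setUI_agf2 (X1 X2 : {set I * bool}) :
  X1 \subset agf A1 -> X2 \subset agf A2 -> (X1 :|: X2) :&: agf A2 = X2.
Proof.
move=> X1A1 /setIidPl X2A2; rewrite setIUl X2A2 agf_compl.
have: [disjoint X1 & ~: agf A1] by rewrite disjoints_subset setCK.
by move=> /disjoint_setI0 ->; rewrite set0U.
Qed.

Lemma consistentU (S1 S2 : {set I * bool}) :
  S1 \subset agf A1 -> S2 \subset agf A2 ->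
  consistent S1 -> consistent S2 -> consistent (S1 :|: S2).
Proof.
move=> S1A1 S2A2 S1c S2c.
have [J1 J1s S1J1] := consistent_extend S1c S1A1.
have [J2 J2s S2J2] := consistent_extend S2c S2A2.
exact: consistentS (setUSS S1J1 S2J2) (indep J1s J2s).
Qed.

Lemma consistentU_agf (S1 S : {set I * bool}) :
  S1 \subset agf A1 -> consistent S1 -> consistent S ->
  consistent (S1 :|: S :&: agf A2).
Proof.
move=> S1A1 S1c Sc.
by apply: consistentU (subsetIr _ _) S1c (consistentS (subsetIl _ _) Sc).
Qed.

Lemma JS_union (J1 J2 : {set I * bool}) :
  JS A1 J1 -> JS A2 J2 -> JS [set: I] (J1 :|: J2).
Proof.
move=> J1s J2s; split; first by apply/subsetP=> x; rewrite !inE.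
split; last exact: indep.
move=> i _; rewrite !inE.
have [iA1|iA2] := boolP (i \in A1).
  by case: J1s => _ [/(_ i iA1) /orP[] -> _]; rewrite ?orbT.
have {}iA2 : i \in A2 by rewrite A2_compl inE.
by case: J2s => _ [/(_ i iA2) /orP[] -> _]; rewrite ?orbT.
Qed.

Lemma maj_split (P : profile) :
  maj A1 (restrict P A1) :|: maj A2 (restrict P A2) = maj [set: I] P.
Proof. by rewrite !maj_restrict setI_agf_split. Qed.

Variable P : profile.

Lemma MC_restrict J :
  MC Gamma phi [set: I] P J -> MC Gamma phi A1 (restrict P A1) (J :&: agf A1).
Proof.
move=> [Js [S [SM Sc Smax SJ]]]; split; first exact: JS_restrict.
exists (S :&: agf A1); split; first by rewrite maj_restrict setSI.
- exact: consistentS (subsetIl _ _) Sc.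
- move=> S' SS' S'M S'c; have S'A1 := subset_trans S'M (maj_sub _ _).
  rewrite -(setUI_agf1 S'A1 (subsetIr S _)) (Smax (S' :|: S :&: agf A2)) //.
  + by rewrite -{1}(setI_agf_split S) setUSS.
  + by rewrite -maj_split setUSS // maj_restrict setSI.
  + exact: consistentU_agf.
- exact: setSI.
Qed.

Lemma MC_union J1 J2 :
  MC Gamma phi A1 (restrict P A1) J1 -> MC Gamma phi A2 (restrict P A2) J2 ->
  MC Gamma phi [set: I] P (J1 :|: J2).
Proof.
move=> [J1s [S1 [S1M S1c S1max S1J1]]] [J2s [S2 [S2M S2c S2max S2J2]]].
split; first exact: JS_union.
have S1A1 := subset_trans S1M (maj_sub _ _).
have S2A2 := subset_trans S2M (maj_sub _ _).
exists (S1 :|: S2); split; first by rewrite -maj_split setUSS.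
- exact: consistentU.
- move=> S' SS' S'M S'c.
  have S1S' : S1 \subset S' :&: agf A1.
    by rewrite subsetI S1A1 (subset_trans (subsetUl _ _) SS').
  have S2S' : S2 \subset S' :&: agf A2.
    by rewrite subsetI S2A2 (subset_trans (subsetUr _ _) SS').
  have S'1 : S' :&: agf A1 = S1.
    by apply: S1max S1S' _ (consistentS (subsetIl _ _) S'c); rewrite maj_restrict setSI.
  have S'2 : S' :&: agf A2 = S2.
    by apply: S2max S2S' _ (consistentS (subsetIl _ _) S'c); rewrite maj_restrict setSI.
  by rewrite -(setI_agf_split S') S'1 S'2.
- exact: setUSS.
Qed.

Lemma MCC_restrict J :
  MCC Gamma phi [set: I] P J -> MCC Gamma phi A1 (restrict P A1) (J :&: agf A1).
Proof.
move=> [Js [S [SM Sc Smax SJ]]]; split; first exact: JS_restrict.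
exists (S :&: agf A1); split; first by rewrite maj_restrict setSI.
- exact: consistentS (subsetIl _ _) Sc.
- move=> S' S'M S'c; have S'A1 := subset_trans S'M (maj_sub _ _).
  have := Smax (S' :|: S :&: agf A2).
  rewrite -(card_agf_split (S' :|: _)) setUI_agf1 ?setUI_agf2 ?subsetIr //.
  rewrite -(card_agf_split S) leq_add2r; apply.
  + by rewrite -maj_split setUSS // maj_restrict setSI.
  + exact: consistentU_agf.
- exact: setSI.
Qed.

Lemma MCC_union J1 J2 :
  MCC Gamma phi A1 (restrict P A1) J1 -> MCC Gamma phi A2 (restrict P A2) J2 ->
  MCC Gamma phi [set: I] P (J1 :|: J2).
Proof.
move=> [J1s [S1 [S1M S1c S1max S1J1]]] [J2s [S2 [S2M S2c S2max S2J2]]].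
split; first exact: JS_union.
have S1A1 := subset_trans S1M (maj_sub _ _).
have S2A2 := subset_trans S2M (maj_sub _ _).
exists (S1 :|: S2); split; first by rewrite -maj_split setUSS.
- exact: consistentU.
- move=> S' S'M S'c.
  rewrite -(card_agf_split S') -(card_agf_split (S1 :|: S2)) setUI_agf1 ?setUI_agf2 //.
  apply: leq_add; [apply: S1max | apply: S2max];
    by rewrite ?maj_restrict ?setSI //; apply: consistentS (subsetIl _ _) S'c.
- exact: setUSS.
Qed.

Lemma DH_split (Q : profile) :
  DH (restrict P A1) (restrict Q A1) + DH (restrict P A2) (restrict Q A2) = DH P Q.
Proof.
rewrite /DH -big_split; apply: eq_bigr => k _.
by rewrite /dH /restrict !setDIIr; apply: card_agf_split.
Qed.

Definition profileU (Q1 Q2 : profile) : profile := fun k => Q1 k :|: Q2 k.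

Lemma is_profileU (Q1 Q2 : profile) :
  is_profile A1 Q1 -> is_profile A2 Q2 -> is_profile [set: I] (profileU Q1 Q2).
Proof. by move=> Q1p Q2p k; apply: JS_union. Qed.

Lemma restrict_profileU (Q1 Q2 : profile) : is_profile A1 Q1 -> is_profile A2 Q2 ->
  restrict (profileU Q1 Q2) A1 = Q1 /\ restrict (profileU Q1 Q2) A2 = Q2.
Proof.
move=> Q1p Q2p; split; apply: functional_extensionality => k.
  exact: setUI_agf1 (Q1p k).1 (Q2p k).1.
exact: setUI_agf2 (Q1p k).1 (Q2p k).1.
Qed.

Lemma consistent_maj_split (Q : profile) :
  consistent (maj [set: I] Q) <->
  consistent (maj A1 (restrict Q A1)) /\ consistent (maj A2 (restrict Q A2)).
Proof.
split=> [Qc | [Q1c Q2c]].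
  by split; apply: consistentS Qc; rewrite maj_restrict subsetIl.
by rewrite -maj_split; apply: consistentU; rewrite // maj_sub.
Qed.

Lemma FULL_H_restrict J :
  FULL_H Gamma phi [set: I] P J -> FULL_H Gamma phi A1 (restrict P A1) (J :&: agf A1).
Proof.
move=> [Js [Q [Qp Qc Qmin QJ]]]; split; first exact: JS_restrict.
have [Qc1 Qc2] := (consistent_maj_split Q).1 Qc.
exists (restrict Q A1); split; first exact: is_profile_restrict.
- exact: Qc1.
- move=> Q1 Q1p Q1c.
  have Q2p := is_profile_restrict A2 Qp.
  have [QU1 QU2] := restrict_profileU Q1p Q2p.
  have := Qmin (profileU Q1 (restrict Q A2)) (is_profileU Q1p Q2p).
  rewrite -(DH_split Q) -DH_split QU1 QU2 leq_add2r; apply.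
  by apply/(consistent_maj_split _).2; rewrite QU1 QU2.
- by rewrite maj_restrict setSI.
Qed.

Lemma FULL_H_union J1 J2 :
  FULL_H Gamma phi A1 (restrict P A1) J1 -> FULL_H Gamma phi A2 (restrict P A2) J2 ->
  FULL_H Gamma phi [set: I] P (J1 :|: J2).
Proof.
move=> [J1s [Q1 [Q1p Q1c Q1min Q1J1]]] [J2s [Q2 [Q2p Q2c Q2min Q2J2]]].
split; first exact: JS_union.
have [QU1 QU2] := restrict_profileU Q1p Q2p.
exists (profileU Q1 Q2); split; first exact: is_profileU.
- by apply/(consistent_maj_split _).2; rewrite QU1 QU2.
- move=> Q Qp Qc; have [Qc1 Qc2] := (consistent_maj_split Q).1 Qc.
  rewrite -DH_split -(DH_split Q) QU1 QU2.
  by apply: leq_add; [apply: Q1min | apply: Q2min] => //; apply: is_profile_restrict.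
- by rewrite -maj_split QU1 QU2 setUSS.
Qed.

Lemma filter_agf2 s : {subset s <= agf A2} -> [seq x <- s | x \in agf A1] = [::].
Proof.
move=> sA2; apply/eqP; rewrite -[_ == _]negbK -has_filter.
by apply/hasPn=> x /sA2; rewrite agf_compl in_setC.
Qed.

Lemma perm_agf_cat s1 s2 : perm_eq s1 (enum (agf A1)) -> perm_eq s2 (enum (agf A2)) ->
  perm_eq (s1 ++ s2) (enum (agf [set: I])).
Proof.
move=> s1p s2p; apply: perm_trans (perm_cat s1p s2p) _.
apply: uniq_perm; rewrite ?cat_uniq ?enum_uniq ?andbT //.
  by apply/hasPn=> x; rewrite !mem_enum agf_compl in_setC.
by move=> x; rewrite mem_cat !mem_enum agf_compl in_setC orbN !inE.
Qed.

Lemma greedy_restrict S s T : greedy S s T -> consistent S ->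
  greedy (S :&: agf A1) [seq x <- s | x \in agf A1] (T :&: agf A1).
Proof.
elim=> {S s T} [S | S x s T xSc _ IH | S x s T xSnc _ IH] Sc /=.
- exact: greedy_nil.
- have := IH xSc; rewrite setU1I; case: ifP => xA1 g //.
  by apply: greedy_add g; apply: consistentS xSc; rewrite setUS // subsetIl.
- have := IH Sc; case: ifP => xA1 g //.
  apply: greedy_skip g => xSc; apply: xSnc.
  rewrite -(setI_agf_split S) setUA; apply: consistentU_agf => //.
  by rewrite subUset sub1set xA1 subsetIr.
Qed.

Lemma RA_restrict J :
  RA Gamma phi [set: I] P J -> RA Gamma phi A1 (restrict P A1) (J :&: agf A1).
Proof.
move=> [s [sp ss g]]; exists [seq x <- s | x \in agf A1]; split.
- apply: uniq_perm; [by rewrite filter_uniq // (perm_uniq sp) enum_uniq|exact: enum_uniq|].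
  by move=> x; rewrite mem_filter (perm_mem sp) !mem_enum !inE andbT.
- rewrite sorted_ranked_restrict; first exact: sorted_filter (@ranked_trans P) _ _ ss.
  by move=> x; rewrite mem_filter => /andP[].
- by have := greedy_restrict g consistent0; rewrite set0I.
Qed.

End Partition.

(* The greedy scan is total and deterministic, so the scan of the merged
   ranking is the union of the two scans by greedy_restrict. *)
Lemma RA_union (A1 A2 : {set I}) :
  A2 = ~: A1 -> independent Gamma phi A1 A2 -> forall (P : profile) J1 J2,
  RA Gamma phi A1 (restrict P A1) J1 -> RA Gamma phi A2 (restrict P A2) J2 ->
  RA Gamma phi [set: I] P (J1 :|: J2).
Proof.
move=> A2C ind P J1 J2 [s1 [s1p s1s g1]] [s2 [s2p s2s g2]].
have A1C : A1 = ~: A2 by rewrite A2C setCK.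
have s1A1 : {subset s1 <= agf A1} by move=> x; rewrite (perm_mem s1p) mem_enum.
have s2A2 : {subset s2 <= agf A2} by move=> x; rewrite (perm_mem s2p) mem_enum.
rewrite sorted_ranked_restrict // in s1s; rewrite sorted_ranked_restrict // in s2s.
pose s := sort (ranked P) (s1 ++ s2).
have s1f : [seq x <- s1 | x \in agf A1] = s1 by apply/all_filterP/allP.
have s2f : [seq x <- s2 | x \in agf A2] = s2 by apply/all_filterP/allP.
have sA1 : [seq x <- s | x \in agf A1] = s1.
  by rewrite filter_sort_ranked filter_cat s1f (filter_agf2 A2C s2A2) cats0.
have sA2 : [seq x <- s | x \in agf A2] = s2.
  by rewrite filter_sort_ranked filter_cat s2f (filter_agf2 A1C s1A1).
have [T gT] := greedy_total set0 s.
have TA1 : T :&: agf A1 = J1.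
  have := greedy_restrict A2C ind gT consistent0.
  by rewrite set0I sA1 => /greedy_functional; apply.
have TA2 : T :&: agf A2 = J2.
  have := greedy_restrict A1C (independent_sym ind) gT consistent0.
  by rewrite set0I sA2 => /greedy_functional; apply.
exists s; split.
- by rewrite perm_sort; apply: perm_agf_cat s1p s2p.
- exact: (@sort_sorted _ (ranked P) (@ranked_total P)).
- by rewrite -TA1 -TA2 (setI_agf_split A2C).
Qed.

Lemma agenda_separable_of (R : rule n I) :
  (forall A1 A2 : {set I}, A2 = ~: A1 -> independent Gamma phi A1 A2 ->
     forall P J, R [set: I] P J -> R A1 (restrict P A1) (J :&: agf A1)) ->
  (forall A1 A2 : {set I}, A2 = ~: A1 -> independent Gamma phi A1 A2 ->
     forall P J1 J2, R A1 (restrict P A1) J1 -> R A2 (restrict P A2) J2 ->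
     R [set: I] P (J1 :|: J2)) ->
  agenda_separable Gamma phi R.
Proof.
move=> R_restrict R_union A1 A2 P part ind _ J.
have A2C := partition2_compl part.
have A1C : A1 = ~: A2 by rewrite A2C setCK.
split=> [RJ | [J1 [J2 [RJ1 RJ2 ->]]]]; last exact: R_union _ _ A2C ind _ _ _ RJ1 RJ2.
exists (J :&: agf A1), (J :&: agf A2); split; first exact: R_restrict _ _ A2C ind _ _ RJ.
  exact: R_restrict _ _ A1C (independent_sym ind) _ _ RJ.
by rewrite (setI_agf_split A2C).
Qed.

End Agenda.

Theorem proposition3 (V : Type) (Gamma : form V) (n : nat) (I : finType)
    (phi : I -> form V) :
  (exists v : V -> bool, eval v Gamma) -> 0 < n -> agenda_ok phi ->
  [/\ @agenda_separable V Gamma n I phi (@MC V Gamma n I phi),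
      @agenda_separable V Gamma n I phi (@MCC V Gamma n I phi),
      @agenda_separable V Gamma n I phi (@RA V Gamma n I phi)
    & @agenda_separable V Gamma n I phi (@FULL_H V Gamma n I phi)].
Proof.
move=> Gamma_sat _ _.
split; apply: agenda_separable_of => A1 A2 A2C ind P.
- by move=> J /(MC_restrict A2C ind).
- by move=> J1 J2 RJ1 /(MC_union A2C ind RJ1).
- by move=> J /(MCC_restrict A2C ind).
- by move=> J1 J2 RJ1 /(MCC_union A2C ind RJ1).
- by move=> J /(RA_restrict Gamma_sat A2C ind).
- by move=> J1 J2 RJ1 /(RA_union Gamma_sat A2C ind RJ1).
- by move=> J /(FULL_H_restrict A2C ind).
- by move=> J1 J2 RJ1 /(FULL_H_union A2C ind RJ1).
Qed.
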